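(* For each $n \in \{97, 193, 289\}$, there exists a Shrikhande-graph-design of order $n$. That is, for each such $n$, the edge set of the complete graph $K_n$ can be partitioned into $n(n-1)/96$ subgraphs, each isomorphic to the Shrikhande graph.
   Context: The Shrikhande graph is the Cayley graph on the group $\mathbb{Z}_4 \times \mathbb{Z}_4$ with connection set $\{\pm(1,0), \pm(0,1), \pm(1,1)\}$. It is a 6-regular graph on 16 vertices with 48 edges. *)

From mathcomp Require Import all_boot all_algebra.
Set Implicit Arguments. Unset Strict Implicit. Unset Printing Implicit Defensive.
Import GRing.Theory.
Local Open Scope ring_scope.

Definition shrV : finType := ('Z_4 * 'Z_4)%type.

Definition shr_conn (d : 'Z_4 * 'Z_4) : bool :=
  (d == (1, 0)) || (d == (-1, 0)) || (d == (0, 1)) || (d == (0, -1))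
  || (d == (1, 1)) || (d == (-1, -1)).

(* Cayley graph adjacency: u ~ v iff v - u lies in the connection set. *)
Definition shrikhande : rel shrV :=
  fun u v => shr_conn (v.1 - u.1, v.2 - u.2).

Definition copy_edge (n : nat) (f : shrV -> 'I_n) : rel 'I_n :=
  fun x y => [exists u, exists v, [&& shrikhande u v, f u == x & f v == y]].

(* A Shrikhande-graph-design of order n: a family of n(n-1)/96 subgraphs of
   K_n, each the image of an injective embedding of the Shrikhande graph
   (hence isomorphic to it), such that every edge of K_n lies in exactly
   one of them. *)
Definition shrikhande_design (n : nat) : Prop :=
  exists f : 'I_((n * (n - 1)) %/ 96) -> shrV -> 'I_n,
    (forall i, injective (f i)) /\
    (forall x y : 'I_n, x != y -> exists! i, copy_edge (f i) x y).

(** All three designs are developments of base blocks.  For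
    [G = Z_97], [Z_193] and [Z_17 x Z_17] we exhibit respectively 1, 2 and 3
    injective maps of the Shrikhande graph into [G] whose 96 ordered edge
    differences [g v - g u] together run over every nonzero element of [G]
    exactly once.  Then an ordered pair [(x, y)] of distinct elements of [G]
    lies in exactly one translate [g + t]: the block and the edge are forced
    by the difference [y - x], and the translation by [x].  This yields
    [#|G| * #blocks = n (n - 1) / 96] copies partitioning the edges of [K_n];
    the difference property of the blocks is checked by computation. *)
From HB Require Import structures.
From mathcomp Require Import all_boot all_algebra.
Set Implicit Arguments. Unset Strict Implicit. Unset Printing Implicit Defensive.
Import GRing.Theory.
Local Open Scope ring_scope.

Lemma uniq_map_inj_in (T1 T2 : eqType) (f : T1 -> T2) (s : seq T1) :
  uniq (map f s) -> {in s &, injective f}.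
Proof.
elim: s => //= a s IHs /andP [fa_notin uniq_fs] x y; rewrite !inE.
case/predU1P => [-> | xs] /predU1P [-> | ys] // fxy.
- by move: fa_notin; rewrite fxy map_f.
- by move: fa_notin; rewrite -fxy map_f.
- exact: IHs.
Qed.

Section CompleteDecomposition.
Variables (T : finType) (E : rel T).

Definition image_rel (V : finType) (f : T -> V) : rel V :=
  fun x y => [exists u, exists v, [&& E u v, f u == x & f v == y]].

Definition complete_decomposition (I V : finType) (F : I -> T -> V) : Prop :=
  (forall i, injective (F i)) /\
  (forall x y : V, x != y -> exists! i, image_rel (F i) x y).

Lemma image_rel_comp (V V' : finType) (f : T -> V) (e : V -> V') (e' : V' -> V) :
  cancel e e' -> cancel e' e ->
  forall x y, image_rel (e \o f) x y = image_rel f (e' x) (e' y).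
Proof.
move=> eK e'K x y; apply/existsP/existsP.
all: move=> [u /existsP [v /and3P [Euv /eqP fu /eqP fv]]].
all: exists u; apply/existsP; exists v; rewrite Euv /=.
- by rewrite -fu -fv !eK !eqxx.
- by rewrite fu fv !e'K !eqxx.
Qed.

Lemma complete_decomposition_bij (I I' V V' : finType) (F : I -> T -> V)
    (h : I' -> I) (e : V -> V') :
  bijective h -> bijective e -> complete_decomposition F ->
  complete_decomposition (fun i => e \o F (h i)).
Proof.
move=> [h' hK h'K] [e' eK e'K] [F_inj F_dec]; split.
  by move=> i u v /(can_inj eK) /F_inj.
move=> x y xy; have /F_dec [i [Fi Fi_uniq]] : e' x != e' y.
  by apply: contra xy => /eqP /(can_inj e'K) ->.
exists (h' i); split; first by rewrite /= (image_rel_comp _ eK e'K) h'K.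
move=> i' Fi'; rewrite -(hK i'); congr h'; apply: Fi_uniq.
by rewrite -(image_rel_comp _ eK e'K).
Qed.

Lemma complete_decomposition_card (I V : finType) (F : I -> T -> V) (N M : nat) :
  #|I| = N -> #|V| = M -> complete_decomposition F ->
  exists f : 'I_N -> T -> 'I_M, complete_decomposition f.
Proof.
move=> <- <- decF; exists (fun i => enum_rank \o F (enum_val i)).
exact: complete_decomposition_bij (enum_val_bij I)
  (Bijective (@enum_rankK V) (@enum_valK V)) decF.
Qed.

End CompleteDecomposition.

Section DifferenceFamily.
Variables (T : finType) (E : rel T) (G : finZmodType) (J : finType).
Variable g : J -> T -> G.

Definition difference_family : Prop :=
  (forall j, injective (g j)) /\
  (forall d : G, d != 0 -> exists! p : J * T * T,
      E p.1.2 p.2 && (g p.1.1 p.2 - g p.1.1 p.1.2 == d)).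

Definition translate (i : J * G) (u : T) : G := g i.1 u + i.2.

Lemma translate_decomposition :
  difference_family -> complete_decomposition E translate.
Proof.
move=> [g_inj g_diff]; split; first by move=> i u v /addIr /g_inj.
move=> x y xy; have : y - x != 0 by rewrite subr_eq0 eq_sym.
case/g_diff => -[[j u] v] /= [/andP [Euv /eqP guv] uniq_uv].
exists (j, x - g j u); split.
  apply/existsP; exists u; apply/existsP; exists v; rewrite /translate /= Euv.
  by rewrite addrC subrK addrCA guv addrCA subrr addr0 !eqxx.
move=> [j' t] /existsP [u' /existsP [v' /and3P [Euv' /eqP xE /eqP yE]]].
have /= := uniq_uv (j', u', v'); rewrite Euv' -xE -yE /translate /=.
rewrite opprD addrACA subrr addr0 eqxx => /(_ isT) [j'E u'E].
by rewrite -j'E -u'E /translate /= addrC addKr.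
Qed.

Variables (sJ : seq J) (sT : seq T) (sG : seq G).
Hypotheses (sJ_full : forall j, j \in sJ) (sT_full : forall u, u \in sT).
Hypothesis sG_full : forall d, d \in sG.

Definition edge_triples : seq (J * T * T) :=
  [seq p <- [seq (q, v) | q <- [seq (j, u) | j <- sJ, u <- sT], v <- sT]
     | E p.1.2 p.2].

Definition edge_differences : seq G :=
  [seq g p.1.1 p.2 - g p.1.1 p.1.2 | p <- edge_triples].

(* The [let] makes [vm_compute] build the list of differences only once. *)
Definition difference_family_seq : bool :=
  let D := edge_differences in
  [&& all (fun j => uniq (map (g j) sT)) sJ, uniq D
    & all (fun d => (d \in D) == (d != 0)) sG].

Lemma mem_edge_triples p : (p \in edge_triples) = E p.1.2 p.2.
Proof.
case: p => [[j u] v]; rewrite mem_filter andb_idr // => _.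
by rewrite allpairs_f // allpairs_f.
Qed.

Lemma difference_family_of_seq : difference_family_seq -> difference_family.
Proof.
case/and3P => /allP g_uniq diff_uniq /allP diff_nz; split.
  by move=> j u v; apply: (uniq_map_inj_in (g_uniq j (sJ_full j))).
move=> d d_nz; have /mapP [p Ep ->] : d \in edge_differences.
  by have /eqP -> := diff_nz d (sG_full d).
exists p; split; first by rewrite -mem_edge_triples Ep eqxx.
move=> p' /andP [Ep' /eqP diff_p'].
by apply: (uniq_map_inj_in diff_uniq) => //; rewrite mem_edge_triples.
Qed.

End DifferenceFamily.

(* [enum] does not reduce under [vm_compute] (its [insub] matches on the opaque
   [idP]), so the checks run on these explicit enumerations instead. *)
Definition Zp_enum n : seq 'I_n.+1 := map inZp (iota 0 n.+1).

Lemma mem_Zp_enum n (x : 'I_n.+1) : x \in Zp_enum n.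
Proof. by rewrite -(valZpK x) map_f // mem_iota /=. Qed.

Lemma mem_allpairs_pair (S R : eqType) (s : seq S) (r : seq R) :
  (forall x, x \in s) -> (forall y, y \in r) ->
  forall p, p \in [seq (x, y) | x <- s, y <- r].
Proof. by move=> s_full r_full [x y]; rewrite allpairs_f. Qed.

Definition shr_enum : seq shrV := [seq (a, b) | a <- Zp_enum 3, b <- Zp_enum 3].

Lemma mem_shr_enum u : u \in shr_enum.
Proof. exact: mem_allpairs_pair (@mem_Zp_enum 3) (@mem_Zp_enum 3) u. Qed.

(* Vertex [(a, b)] of the Shrikhande graph is listed at position [4 a + b]. *)
Definition shr_block (G : zmodType) (s : seq G) (u : shrV) : G :=
  nth 0 s (4 * u.1 + u.2)%N.

Definition shr_blocks (G : zmodType) (k : nat) (bs : seq (seq G)) (j : 'I_k) :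
  shrV -> G := shr_block (nth [::] bs j).

Lemma shrikhande_design_of (n k : nat) (G : finZmodType) (g : 'I_k -> shrV -> G) :
  difference_family shrikhande g -> #|G| = n -> (k * n = n * (n - 1) %/ 96)%N ->
  shrikhande_design n.
Proof.
move=> /translate_decomposition decG cardG kn.
have cardI : #|{: 'I_k * G}| = (n * (n - 1) %/ 96)%N.
  by rewrite card_prod card_ord cardG.
by have [f decf] := complete_decomposition_card cardI cardG decG; exists f.
Qed.

Definition blocks97 : 'I_1 -> shrV -> 'Z_97 := shr_blocks
  [:: [:: 0; 62; 34; 16; 96; 75; 73; 88; 37; 70; 26; 33; 6; 25; 2; 36]].

Lemma difference_family97 : difference_family shrikhande blocks97.
Proof.
apply: (difference_family_of_seq (mem_Zp_enum (n := 0)) mem_shr_enum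
  (mem_Zp_enum (n := 96))).
by vm_compute.
Qed.

Definition blocks193 : 'I_2 -> shrV -> 'Z_193 := shr_blocks
  [:: [:: 0; 134; 116; 71; 190; 174; 1; 108; 176; 44; 94; 84; 141; 29; 120; 62];
      [:: 0; 12; 130; 151; 138; 139; 141; 174; 144; 40; 112; 71; 96; 79; 74; 43]].

Lemma difference_family193 : difference_family shrikhande blocks193.
Proof.
apply: (difference_family_of_seq (mem_Zp_enum (n := 1)) mem_shr_enum
  (mem_Zp_enum (n := 192))).
by vm_compute.
Qed.

(* A named copy of the product, so that it receives a [finZmodType] structure. *)
Definition Z17sq : Type := ('Z_17 * 'Z_17)%type.
HB.instance Definition _ := GRing.Zmodule.on Z17sq.
HB.instance Definition _ := Finite.on Z17sq.

Lemma card_Z17sq : #|{: Z17sq}| = 289%N.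
Proof. by apply: etrans (card_prod _ _) _; rewrite !card_ord. Qed.

Definition Z17sq_enum : seq Z17sq :=
  [seq (a, b) | a <- Zp_enum 16, b <- Zp_enum 16].

Lemma mem_Z17sq_enum (d : Z17sq) : d \in Z17sq_enum.
Proof. exact: mem_allpairs_pair (@mem_Zp_enum 16) (@mem_Zp_enum 16) d. Qed.

Definition blocks289 : 'I_3 -> shrV -> Z17sq := shr_blocks
  [:: [:: (0, 0); (14, 10); (9, 8); (0, 13); (1, 1); (10, 2); (12, 10); (2, 5);
          (7, 12); (0, 8); (1, 14); (3, 2); (7, 2); (14, 13); (3, 13); (2, 6)];
      [:: (0, 0); (16, 1); (12, 0); (8, 14); (3, 10); (12, 9); (6, 8); (0, 1);
          (11, 10); (1, 6); (11, 7); (11, 8); (14, 11); (10, 16); (6, 12); (15, 6)];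
      [:: (0, 0); (10, 0); (9, 9); (12, 8); (12, 14); (8, 3); (14, 2); (15, 5);
          (1, 3); (10, 1); (7, 5); (5, 10); (14, 6); (1, 11); (6, 5); (12, 3)]].

Lemma difference_family289 : difference_family shrikhande blocks289.
Proof.
apply: (difference_family_of_seq (mem_Zp_enum (n := 2)) mem_shr_enum
  mem_Z17sq_enum).
by vm_compute.
Qed.

Local Close Scope ring_scope.

Theorem lemma2p3 (n : nat) : n \in [:: 97; 193; 289] -> shrikhande_design n.
Proof.
rewrite !inE => /or3P [] /eqP ->.
- by apply: shrikhande_design_of difference_family97 _ _; first exact: card_ord.
- by apply: shrikhande_design_of difference_family193 _ _; first exact: card_ord.
- by apply: shrikhande_design_of difference_family289 _ _; first exact: card_Z17sq.
Qed.
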